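(* Let $P$ be a thin orthogonal polygon. If $P$ has no holes, then the dual graph $D$ of the pixelation of $P$ is a tree.
   Context: An orthogonal polygon $P$ is a closed connected region of the plane whose boundary consists of finitely many axis-parallel segments; a hole is a bounded connected component of the complement of $P$. The pixelation of $P$ is the partition of $P$ into rectangles obtained by shooting, from every reflex vertex of $P$, a horizontal and a vertical ray into the interior of $P$ until it hits the boundary of $P$; the resulting rectangles are called pixels, and their corners are pixel-corners. The dual graph $D$ of $P$ has one vertex per pixel, two pixels being adjacent iff they share a side. $P$ is thin if every pixel-corner lies on the boundary of $P$. *)

From HB Require Import structures.
From mathcomp Require Import all_boot all_order all_algebra.
Set Implicit Arguments. Unset Strict Implicit. Unset Printing Implicit Defensive.
Import Order.TTheory GRing.Theory Num.Theory.
Local Open Scope ring_scope.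

(* A cell (i,j) is the closed unit square [i,i+1] x [j,j+1].
   A region S is the union of the closed cells (i,j) with S i j = true.
   Grid point (x,y) is the point with coordinates x,y. *)
Definition cell := (int * int)%type.
Definition region := int -> int -> bool.

Definition inP (S : region) (c : cell) : bool := S c.1 c.2.

Definition around (x y : int) : seq cell :=
  [:: (x - 1, y - 1); (x, y - 1); (x - 1, y); (x, y)].

Definition edge_adj (c d : cell) : bool :=
  ((c.1 == d.1) && ((d.2 == c.2 + 1) || (c.2 == d.2 + 1))) ||
  ((c.2 == d.2) && ((d.1 == c.1 + 1) || (c.1 == d.1 + 1))).

Inductive gwalk (R : cell -> cell -> Prop) : cell -> cell -> Prop :=
| gw_refl c : gwalk R c c
| gw_step c d e : R c d -> gwalk R d e -> gwalk R c e.

Definition bounded (S : region) : Prop :=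
  exists N : nat, forall i j, S i j -> (absz i < N)%N /\ (absz j < N)%N.

(* a point where P touches itself at a corner only (excluded for polygons) *)
Definition pinch (S : region) (x y : int) : bool :=
  (S (x - 1) (y - 1) && S x y && ~~ S x (y - 1) && ~~ S (x - 1) y) ||
  (S x (y - 1) && S (x - 1) y && ~~ S (x - 1) (y - 1) && ~~ S x y).

Definition cells_connected (S : region) : Prop :=
  forall c d, inP S c -> inP S d ->
    gwalk (fun a b => [&& inP S a, inP S b & edge_adj a b]) c d.

Definition orthogonal_polygon (S : region) : Prop :=
  [/\ bounded S, exists c, inP S c, cells_connected S &
      forall x y, ~~ pinch S x y].

(* every connected component of the complement of P is unbounded *)
Definition no_holes (S : region) : Prop :=
  forall c, ~~ inP S c -> forall M : nat, exists d,
    ((M < absz d.1)%N \/ (M < absz d.2)%N) /\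
    gwalk (fun a b => [&& ~~ inP S a, ~~ inP S b & edge_adj a b]) c d.

Definition on_boundary (S : region) (x y : int) : bool :=
  has (inP S) (around x y) && ~~ all (inP S) (around x y).

Definition reflex (S : region) (x y : int) : bool :=
  count (inP S) (around x y) == 3%N.

(* horizontal unit segment [i,i+1] x {y} lies in the interior of P *)
Definition interior_h (S : region) (i y : int) : bool := S i (y - 1) && S i y.
(* vertical unit segment {x} x [j,j+1] lies in the interior of P *)
Definition interior_v (S : region) (x j : int) : bool := S (x - 1) j && S x j.

(* the horizontal unit segment [i,i+1] x {y} is covered by the horizontal
   ray shot from some reflex vertex (x,y) (westwards if the missing cell
   is east of the vertex, eastwards otherwise) before it hits the boundary *)
Definition hray (S : region) (i y : int) : Prop :=
  (exists x, [/\ reflex S x y, ~~ S x (y - 1) || ~~ S x y, i < x &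
       forall k, i <= k < x -> interior_h S k y]) \/
  (exists x, [/\ reflex S x y, ~~ S (x - 1) (y - 1) || ~~ S (x - 1) y, x <= i &
       forall k, x <= k <= i -> interior_h S k y]).

(* the vertical unit segment {x} x [j,j+1] is covered by a vertical ray *)
Definition vray (S : region) (x j : int) : Prop :=
  (exists y, [/\ reflex S x y, ~~ S (x - 1) y || ~~ S x y, j < y &
       forall k, j <= k < y -> interior_v S x k]) \/
  (exists y, [/\ reflex S x y, ~~ S (x - 1) (y - 1) || ~~ S x (y - 1), y <= j &
       forall k, y <= k <= j -> interior_v S x k]).

(* two cells of P share a side that is not cut by a ray *)
Definition join (S : region) (c d : cell) : Prop :=
  [/\ inP S c, inP S d &
    [\/ [/\ c.1 = d.1, d.2 = c.2 + 1 & ~ hray S c.1 d.2],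
        [/\ c.1 = d.1, c.2 = d.2 + 1 & ~ hray S c.1 c.2],
        [/\ c.2 = d.2, d.1 = c.1 + 1 & ~ vray S d.1 c.2] |
        [/\ c.2 = d.2, c.1 = d.1 + 1 & ~ vray S c.1 c.2]]].

(* c and d are cells of P lying in the same pixel *)
Definition same_pixel (S : region) (c d : cell) : Prop :=
  inP S c /\ gwalk (join S) c d.

(* the pixels containing c and d are distinct and share a side
   (dual-graph adjacency) *)
Definition pixel_adj (S : region) (c d : cell) : Prop :=
  ~ same_pixel S c d /\
  exists c' d', [/\ same_pixel S c c', same_pixel S d d' & edge_adj c' d'].

(* grid point (x,y) is a corner of the pixel containing c:
   exactly one of the four incident cells lies in that (rectangular) pixel *)
Definition pixel_corner (S : region) (c : cell) (x y : int) : Prop :=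
  exists2 d, d \in around x y &
    same_pixel S c d /\
    forall d', d' \in around x y -> d' != d -> ~ same_pixel S c d'.

Definition thin (S : region) : Prop :=
  forall c x y, inP S c -> pixel_corner S c x y -> on_boundary S x y.

Definition dual_connected (S : region) : Prop :=
  forall c d, inP S c -> inP S d ->
    gwalk (fun a b => same_pixel S a b \/ pixel_adj S a b) c d.

Definition dual_acyclic (S : region) : Prop :=
  ~ exists s : seq cell,
      [/\ (3 <= size s)%N,
          forall i j, (i < size s)%N -> (j < size s)%N -> i <> j ->
            ~ same_pixel S (nth (0, 0) s i) (nth (0, 0) s j) &
          forall i, (i < size s)%N ->
            pixel_adj S (nth (0, 0) s i) (nth (0, 0) s (i.+1 %% size s))].

Definition dual_is_tree (S : region) : Prop :=
  dual_connected S /\ dual_acyclic S.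

(* Every side shared by two adjacent pixels is cut by a ray, and that ray lies on a
   maximal horizontal or vertical chord of P whose two ends touch the complement.
   If P is thin, no ray crosses the chord in its interior, since the crossing point
   would be a pixel-corner interior to P; hence the cells along each side of the
   chord form a single pixel.  If P has no holes, the chord separates P: for a walk
   of cells, the parity of its crossings with the eastward ray from a grid point is
   a potential that vanishes wherever the complement is reached, so a closed walk
   crosses the chord an even number of times and the two sides of the chord cannot
   be joined without crossing it.  Thus every edge of the dual graph is a bridge,
   and the dual graph, connected because P is, has no cycle.  Vertical chords are
   reduced to horizontal ones by transposing the plane. *)

From mathcomp Require Import all_boot all_order all_algebra zify.
From Stdlib Require Import Classical.
Import Order.TTheory GRing.Theory Num.Theory.
Set Implicit Arguments. Unset Strict Implicit. Unset Printing Implicit Defensive.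
Local Open Scope ring_scope.

Section Walks.
Variable R : cell -> cell -> Prop.

Lemma gwalk1 c d : R c d -> gwalk R c d.
Proof. by move=> Rcd; apply: gw_step Rcd (gw_refl _ _). Qed.

Lemma gwalk_trans c d e : gwalk R c d -> gwalk R d e -> gwalk R c e.
Proof. by elim=> // {}c {}d d' Rcd _ IH /IH; apply: gw_step. Qed.

Lemma gwalk_sym : (forall c d, R c d -> R d c) -> forall c d, gwalk R c d -> gwalk R d c.
Proof.
move=> Rsym c d; elim=> {c d} [c|c d e Rcd _ IH]; first exact: gw_refl.
exact: gwalk_trans IH (gwalk1 (Rsym _ _ Rcd)).
Qed.

End Walks.

Lemma gwalk_map (f : cell -> cell) (R R' : cell -> cell -> Prop) c d :
  (forall a b, R a b -> R' (f a) (f b)) -> gwalk R c d -> gwalk R' (f c) (f d).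
Proof.
move=> fR; elim=> {c d} [c|c d e Rcd _ IH]; first exact: gw_refl.
exact: gw_step (fR _ _ Rcd) IH.
Qed.

Lemma gwalk_sub (R R' : cell -> cell -> Prop) c d :
  (forall a b, R a b -> R' a b) -> gwalk R c d -> gwalk R' c d.
Proof. exact: (@gwalk_map id). Qed.

Lemma edge_adj_cases c d : edge_adj c d -> exists i j,
  [\/ c = (i, j) /\ d = (i, j + 1), c = (i, j + 1) /\ d = (i, j),
      c = (i, j) /\ d = (i + 1, j) | c = (i + 1, j) /\ d = (i, j)].
Proof.
case: c d => c1 c2 [d1 d2]; rewrite /edge_adj /= => /orP[] /andP[/eqP <-] /orP[] /eqP ->.
- by exists c1, c2; constructor 1.
- by exists c1, d2; constructor 2.
- by exists c1, c2; constructor 3.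
- by exists d1, c2; constructor 4.
Qed.

Lemma join_sym S c d : join S c d -> join S d c.
Proof.
case: c d => [c1 c2] [d1 d2] [Sc Sd J].
case: J => -[/= e1 e2 nr]; subst; split=> //.
- by constructor 2.
- by constructor 1.
- by constructor 4.
- by constructor 3.
Qed.

Lemma join_edge_adj S c d : join S c d -> [/\ inP S c, inP S d & edge_adj c d].
Proof.
case: c d => [c1 c2] [d1 d2] [Sc Sd J]; split=> //; rewrite /edge_adj /=.
by case: J => -[/= e1 e2 _]; lia.
Qed.

Lemma join_same_pixel S c d : join S c d -> same_pixel S c d.
Proof. by move=> J; split; [case: J | apply: gwalk1]. Qed.

Lemma same_pixel_refl S c : inP S c -> same_pixel S c c.
Proof. by move=> Sc; split=> //; apply: gw_refl. Qed.

Lemma same_pixel_in S c d : same_pixel S c d -> inP S d.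
Proof.
case=> Sc w; elim: w Sc => // {}c {}d e J _ IH _.
by apply: IH; case: (join_edge_adj J).
Qed.

Lemma same_pixel_sym S c d : same_pixel S c d -> same_pixel S d c.
Proof.
move=> scd; split; first exact: same_pixel_in scd.
by case: scd => _; apply: gwalk_sym => e f /join_sym.
Qed.

Lemma same_pixel_trans S c d e :
  same_pixel S c d -> same_pixel S d e -> same_pixel S c e.
Proof. by move=> [Sc w1] [_ w2]; split=> //; apply: gwalk_trans w1 w2. Qed.

(** * Transposition *)

Definition swap (c : cell) : cell := (c.2, c.1).
Definition tr (S : region) : region := fun i j => S j i.

Lemma swapK : involutive swap.
Proof. by case. Qed.

Lemma edge_adj_swap c d : edge_adj (swap c) (swap d) = edge_adj c d.
Proof. by rewrite /edge_adj orbC. Qed.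

Lemma mem_around_swap c x y : (swap c \in around y x) = (c \in around x y).
Proof. by case: c => c1 c2; rewrite /around !inE !xpair_eqE /=; lia. Qed.

Lemma reflex_tr S x y : reflex (tr S) x y = reflex S y x.
Proof. by rewrite /reflex /= /inP /tr /=; lia. Qed.

Lemma on_boundary_tr S x y : on_boundary (tr S) x y = on_boundary S y x.
Proof. by rewrite /on_boundary /= /inP /tr /=; do 4 case: (S _ _). Qed.

Lemma hray_tr S i y : hray (tr S) i y <-> vray S y i.
Proof.
split=> -[] [x [r e ix int]].
- by left; exists x; rewrite -reflex_tr.
- by right; exists x; rewrite -reflex_tr.
- by left; exists x; rewrite reflex_tr.
- by right; exists x; rewrite reflex_tr.
Qed.

Lemma vray_tr S x j : vray (tr S) x j <-> hray S j x.
Proof. exact: iff_sym (hray_tr (tr S) j x). Qed.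

Lemma join_tr S c d : join S c d -> join (tr S) (swap c) (swap d).
Proof.
case: c d => [c1 c2] [d1 d2] [Sc Sd J]; split=> //.
case: J => -[/= e1 e2 nr];
  [constructor 3|constructor 4|constructor 1|constructor 2]; split=> //.
- by move/vray_tr.
- by move/vray_tr.
- by move/hray_tr.
- by move/hray_tr.
Qed.

Lemma same_pixel_tr S c d : same_pixel S c d -> same_pixel (tr S) (swap c) (swap d).
Proof. by case=> Sc w; split=> //; apply: gwalk_map w => e f /join_tr. Qed.

Lemma same_pixel_tr_swap S c d : same_pixel (tr S) (swap c) (swap d) -> same_pixel S c d.
Proof. by move/same_pixel_tr; rewrite !swapK. Qed.

Definition bounded_by (S : region) (N : nat) : Prop :=
  forall i j, S i j -> (absz i < N)%N /\ (absz j < N)%N.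

Lemma bounded_by_tr S N : bounded_by S N -> bounded_by (tr S) N.
Proof. by move=> bS i j /bS []. Qed.

Lemma no_holes_tr S : no_holes S -> no_holes (tr S).
Proof.
move=> NH c nc M; have [d [far w]] := NH (swap c) nc M.
exists (swap d); split; first by case: far; [right|left].
rewrite -[c]swapK; apply: gwalk_map w => e f /and3P [ne nf ef].
by rewrite edge_adj_swap; apply/and3P.
Qed.

Lemma thin_tr S : thin S -> thin (tr S).
Proof.
move=> TH c x y Sc [d dxy [scd only]]; rewrite on_boundary_tr.
apply: (TH (swap c)) => //; exists (swap d); first by rewrite mem_around_swap.
split; first exact: same_pixel_tr scd.
move=> d' d'yx d'd sp'; apply: (only (swap d')).
- by rewrite -mem_around_swap swapK.
- by apply: contraNneq d'd => <-; rewrite swapK.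
- by have := same_pixel_tr sp'; rewrite swapK.
Qed.

Lemma first_exit (P : int -> bool) (N : nat) k :
  (forall i, P i -> (absz i < N)%N) ->
  exists t : nat, (forall u : nat, (u < t)%N -> P (k + u%:Z)) /\ ~~ P (k + t%:Z).
Proof.
move=> bP; have ex : exists t : nat, ~~ P (k + t%:Z).
  by exists (N + absz k)%N; apply/negP => /bP; lia.
case: (ex_minnP ex) => t Pt min_t; exists t; split=> // u ut.
by apply/negPn/negP => /min_t; lia.
Qed.

Lemma maximal_run (P : int -> bool) (N : nat) k :
  (forall i, P i -> (absz i < N)%N) -> P k ->
  exists a b, [/\ a <= k < b, forall i, a <= i < b -> P i, ~~ P (a - 1) & ~~ P b].
Proof.
move=> bP Pk.
have [t [Pr Pt]] := first_exit k bP.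
have bPN i : P (- i) -> (absz i < N)%N by move/bP; rewrite abszN.
have [s [Pl Ps]] := first_exit (- k) bPN.
have t_gt0 : (0 < t)%N by case: t {Pr} Pt => //; rewrite addr0 Pk.
have s_gt0 : (0 < s)%N by case: s {Pl} Ps => //; rewrite addr0 opprK Pk.
exists (k - s%:Z + 1), (k + t%:Z); split.
- lia.
- move=> i iab; have [ki|ik] := lerP k i.
    by have := Pr (absz (i - k)) ltac:(lia); have -> : k + (absz (i - k))%:Z = i by lia.
  by have := Pl (absz (k - i)) ltac:(lia); have -> : - (- k + (absz (k - i))%:Z) = i by lia.
- by have -> : k - s%:Z + 1 - 1 = - (- k + s%:Z) by lia.
- exact: Pt.
Qed.

Lemma int_interval_ind (Q : int -> Prop) (a b k : int) : a <= k < b -> Q k ->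
  (forall i, a <= i -> i + 1 < b -> Q i <-> Q (i + 1)) -> forall i, a <= i < b -> Q i.
Proof.
move=> kab Qk QS.
have up (n : nat) : k + n%:Z < b -> Q (k + n%:Z).
  elim: n => [|n IH] kn; first by rewrite addr0.
  have -> : k + n.+1%:Z = k + n%:Z + 1 by lia.
  by apply/(QS (k + n%:Z)); [lia | lia | apply: IH; lia].
have down (n : nat) : a <= k - n%:Z -> Q (k - n%:Z).
  elim: n => [|n IH] akn; first by rewrite subr0.
  have e : k - n%:Z = k - n.+1%:Z + 1 by lia.
  by apply/(QS (k - n.+1%:Z)); [lia | lia | rewrite -e; apply: IH; lia].
move=> i iab; have [ki|ik] := lerP k i.
- by rewrite (_ : i = k + (absz (i - k))%:Z); [apply: up | ]; lia.
- by rewrite (_ : i = k - (absz (k - i))%:Z); [apply: down | ]; lia.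
Qed.

Lemma addb_flip_once (g : int -> bool) (a b k : int) : a <= k < b ->
  (forall i, a <= i < b -> g i (+) g (i + 1) = (i == k)) -> g b = ~~ g a.
Proof.
move=> kab gs.
have flip (n : nat) : a + n%:Z <= b -> g (a + n%:Z) = g a (+) (k < a + n%:Z).
  elim: n => [|n IH] lab; first by rewrite addr0; lia.
  have -> : a + n.+1%:Z = a + n%:Z + 1 by lia.
  by have := gs (a + n%:Z) ltac:(lia); have := IH ltac:(lia); lia.
have := flip (absz (b - a)) ltac:(lia).
have -> : a + (absz (b - a))%:Z = b by lia.
lia.
Qed.

(** * Rays and chords *)

Lemma hray_interior S i y : hray S i y -> interior_h S i y.
Proof. by case=> -[x [_ _ ix int]]; apply: int; lia. Qed.

Lemma hray_shift_right S i y : hray S i y -> interior_h S (i + 1) y -> hray S (i + 1) y.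
Proof.
move=> [[x [rx ex ix int]]|[x [rx ex xi int]]] int1.
- have [e|ne] := eqVneq (i + 1) x.
    by move: ex; rewrite -e; case/andP: int1 => -> ->.
  by left; exists x; split=> // [|k ?]; [lia | apply: int; lia].
- right; exists x; split=> // [|k ?]; first lia.
  by have [->|?] := eqVneq k (i + 1); [exact: int1 | apply: int; lia].
Qed.

Lemma hray_shift_left S i y : hray S (i + 1) y -> interior_h S i y -> hray S i y.
Proof.
move=> [[x [rx ex ix int]]|[x [rx ex xi int]]] int0.
- left; exists x; split=> // [|k ?]; first lia.
  by have [->|?] := eqVneq k i; [exact: int0 | apply: int; lia].
- have [e|ne] := eqVneq x (i + 1).
    by move: ex; rewrite e addrK; case/andP: int0 => -> ->.
  by right; exists x; split=> // [|k ?]; [lia | apply: int; lia].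
Qed.

Lemma vray_shift_up S x j : vray S x j -> interior_v S x (j + 1) -> vray S x (j + 1).
Proof. by move=> /(hray_tr S) r int; apply/(hray_tr S); apply: hray_shift_right r int. Qed.

Definition hchord (S : region) (a b y : int) : Prop :=
  [/\ forall k, a <= k < b -> hray S k y, ~~ interior_h S (a - 1) y & ~~ interior_h S b y].

Lemma hray_chord S N i y : bounded_by S N -> hray S i y ->
  exists a b, hchord S a b y /\ a <= i < b.
Proof.
move=> bS ri.
have bint k : interior_h S k y -> (absz k < N)%N by case/andP=> _ /bS [].
have [a [b [iab int_ab na nb]]] := maximal_run bint (hray_interior ri).
exists a, b; split=> //; split=> //.
apply: (int_interval_ind iab ri) => k ak kb.
by split=> [/hray_shift_right|/hray_shift_left]; apply; apply: int_ab; lia.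
Qed.

(** * Crossing parity *)

Definition hcross (x y : int) (c d : cell) : bool :=
  ((c == (x, y - 1)) && (d == (x, y))) || ((c == (x, y)) && (d == (x, y - 1))).
Definition vcross (x y : int) (c d : cell) : bool :=
  ((c == (x - 1, y)) && (d == (x, y))) || ((c == (x, y)) && (d == (x - 1, y))).

Lemma hcross_cases k y c d : hcross k y c d ->
  (c = (k, y - 1) /\ d = (k, y)) \/ (c = (k, y) /\ d = (k, y - 1)).
Proof. by case/orP=> /andP [/eqP -> /eqP ->]; [left|right]. Qed.

Lemma hcross_sym x y c d : hcross x y c d = hcross x y d c.
Proof. by case: c d => c1 c2 [d1 d2]; rewrite /hcross !xpair_eqE; lia. Qed.

Lemma hcross_at k y c d x y' : hcross k y c d -> hcross x y' c d = (x == k) && (y' == y).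
Proof. by case: c d => c1 c2 [d1 d2]; rewrite /hcross !xpair_eqE; lia. Qed.

Lemma hcross_fst x y c d : hcross x y c d -> c.1 = x.
Proof. by case/hcross_cases=> -[-> _]. Qed.

Lemma hcross_row x y c d : c.2 = d.2 -> hcross x y c d = false.
Proof. by case: c d => c1 c2 [d1 d2] /= e; rewrite /hcross !xpair_eqE; lia. Qed.

Lemma hcross_swap x y c d : hcross y x (swap c) (swap d) = vcross x y c d.
Proof. by case: c d => c1 c2 [d1 d2]; rewrite /hcross /vcross !xpair_eqE /=; lia. Qed.

Lemma hcross_edge_adj x y c d : hcross x y c d -> edge_adj c d.
Proof. by case/hcross_cases=> -[-> ->]; rewrite /edge_adj /=; lia. Qed.

Lemma hcross_in S k y c d : interior_h S k y -> hcross k y c d -> inP S c /\ inP S d.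
Proof. by case/andP=> S1 S2 /hcross_cases [] [-> ->]. Qed.

Lemma hcross_interior S x y c d :
  inP S c -> inP S d -> hcross x y c d -> interior_h S x y.
Proof.
by move=> Sc Sd /hcross_cases [] [ec ed]; move: Sc Sd;
  rewrite ec ed /interior_h /inP /= => -> ->.
Qed.

Lemma vcross_interior S x y c d :
  inP S c -> inP S d -> vcross x y c d -> interior_v S x y.
Proof.
by move=> Sc Sd /orP [] /andP [/eqP cxy /eqP dxy]; move: Sc Sd;
  rewrite cxy dxy /interior_v /inP /= => -> ->.
Qed.

Lemma cross_vstep x y i j :
  (hcross x y (i, j) (i, j + 1) = (x == i) && (y == j + 1)) *
  (hcross x y (i, j + 1) (i, j) = (x == i) && (y == j + 1)) *
  (vcross x y (i, j) (i, j + 1) = false) * (vcross x y (i, j + 1) (i, j) = false).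
Proof. by rewrite /hcross /vcross !xpair_eqE; do !split; lia. Qed.

Lemma cross_hstep x y i j :
  (hcross x y (i, j) (i + 1, j) = false) * (hcross x y (i + 1, j) (i, j) = false) *
  (vcross x y (i, j) (i + 1, j) = (x == i + 1) && (y == j)) *
  (vcross x y (i + 1, j) (i, j) = (x == i + 1) && (y == j)).
Proof. by rewrite /hcross /vcross !xpair_eqE; do !split; lia. Qed.

Definition east_ray_cross (x y : int) (c d : cell) : bool := (x <= c.1) && hcross c.1 y c d.
Definition above_ray (x y : int) (c : cell) : bool := (c.2 == y) && (x <= c.1).
Definition far (N : nat) (x y : int) : bool := (N <= absz x)%N || (N <= absz y)%N.
Definition west_parity (N : nat) (x y : int) (c : cell) : bool :=
  (x <= - N%:Z) && (y <= c.2).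

Lemma east_ray_cross_x x y c d :
  east_ray_cross x y c d (+) east_ray_cross (x + 1) y c d = hcross x y c d.
Proof.
rewrite /east_ray_cross; case: (boolP (hcross c.1 y c d)) => h.
  by rewrite (hcross_at x y h) !andbT eqxx; lia.
rewrite !andbF; apply/esym/negbTE; apply: contra h => h.
by rewrite (hcross_fst h).
Qed.

Lemma east_ray_cross_y x y c d : edge_adj c d ->
  east_ray_cross x y c d (+) east_ray_cross x (y + 1) c d =
  vcross x y c d (+) above_ray x y c (+) above_ray x y d.
Proof.
case/edge_adj_cases => i [j [] [-> ->]];
  rewrite /east_ray_cross /above_ray /= ?cross_vstep ?cross_hstep ?eqxx /=; lia.
Qed.

Lemma east_ray_cross_far S N x y c d : bounded_by S N -> inP S c -> inP S d -> edge_adj c d ->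
  far N x y -> east_ray_cross x y c d = west_parity N x y c (+) west_parity N x y d.
Proof.
move=> bS Sc Sd /edge_adj_cases [i [j []]] [cij dij]; subst c d;
  move: Sc Sd => /bS /= [? ?] /bS /= [? ?];
  rewrite /east_ray_cross /west_parity /far /= ?cross_vstep ?cross_hstep ?eqxx /=; lia.
Qed.

Section Potential.

Variables (S : region) (N : nat).
Hypothesis bS : bounded_by S N.

(* [W x y] stands for the parity of the number of steps of a walk from [s] to [e] that
   cross the eastward ray from the grid point (x, y); the walk crosses the segments
   of [H] as prescribed by [hp].  The [above_ray] and [west_parity] terms are what
   the endpoints of an open walk contribute; they cancel for a closed walk. *)
Definition crossing_potential (H : int -> int -> Prop) (hp : int -> int -> bool)
    (s e : cell) (W : int -> int -> bool) : Prop :=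
  [/\ forall x y, H x y -> W x y (+) W (x + 1) y = hp x y,
      forall x y, ~~ interior_h S x y -> W x y = W (x + 1) y,
      forall x y, ~~ interior_v S x y ->
        W x y (+) W x (y + 1) = above_ray x y s (+) above_ray x y e &
      forall x y, far N x y -> W x y = west_parity N x y s (+) west_parity N x y e].

Lemma crossing_potential_cons H hp hp' c d e W :
  inP S c -> inP S d -> edge_adj c d ->
  (forall x y, H x y -> hp' x y = hp x y (+) hcross x y c d) ->
  crossing_potential H hp d e W ->
  crossing_potential H hp' c e (fun x y => W x y (+) east_ray_cross x y c d).
Proof.
move=> Sc Sd cd hp'E [WH Wh Wv Wfar]; split=> x y.
- move=> Hxy; have := east_ray_cross_x x y c d; have := WH x y Hxy; rewrite hp'E //; lia.
- move=> nint; have := east_ray_cross_x x y c d; have := Wh x y nint.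
  have : hcross x y c d = false by apply: contraNF nint; apply: hcross_interior.
  lia.
- move=> nint; have := east_ray_cross_y x y cd; have := Wv x y nint.
  have : vcross x y c d = false by apply: contraNF nint; apply: vcross_interior.
  lia.
- by move=> fxy; have := east_ray_cross_far bS Sc Sd cd fxy; have := Wfar x y fxy; lia.
Qed.

Definition avoiding_step (H : int -> int -> Prop) (c d : cell) : Prop :=
  [/\ inP S c, inP S d, edge_adj c d & forall x y, H x y -> ~~ hcross x y c d].

Lemma avoiding_walk_potential H c e : gwalk (avoiding_step H) c e ->
  exists W, crossing_potential H (fun _ _ => false) c e W.
Proof.
elim=> {c e} [c|c d e [Sc Sd cd nc] _ [W pot]].
  by exists (fun _ _ => false); split=> x y *; rewrite ?addbb.
exists (fun x y => W x y (+) east_ray_cross x y c d).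
by apply: crossing_potential_cons pot => // x y /nc /negbTE ->.
Qed.

Section ClosedWalk.
Variables (H : int -> int -> Prop) (hp : int -> int -> bool) (c0 : cell).
Variable W : int -> int -> bool.
Hypothesis pot : crossing_potential H hp c0 c0 W.

Lemma closed_potential_cell i j : ~~ S i j ->
  [/\ W (i + 1) j = W i j, W i (j + 1) = W i j & W (i + 1) (j + 1) = W i j].
Proof.
case: pot => _ Wh Wv _ /negbTE nS.
have bottom : W i j = W (i + 1) j by apply: Wh; rewrite /interior_h nS andbF.
have top : W i (j + 1) = W (i + 1) (j + 1) by apply: Wh; rewrite /interior_h addrK nS.
have left : W i j (+) W i (j + 1) = false.
  by rewrite Wv ?addbb // /interior_v nS andbF.
split; lia.
Qed.

Lemma closed_potential_complement_walk c d :
  gwalk (fun a b => [&& ~~ inP S a, ~~ inP S b & edge_adj a b]) c d ->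
  W c.1 c.2 = W d.1 d.2.
Proof.
elim=> // {c d} c d e /and3P [nc nd /edge_adj_cases [i [j []]] [cij dij]] _ <-;
  subst c d; move: (closed_potential_cell nc) (closed_potential_cell nd);
  by move=> /= [? ? ?] [? ? ?]; congruence.
Qed.

Lemma closed_potential_vanishes : no_holes S ->
  forall x y, ~~ all (inP S) (around x y) -> W x y = false.
Proof.
move=> NH x y /allPn [c cxy nc].
have Wc : W c.1 c.2 = false.
  have [d [dfar w]] := NH c nc N.
  rewrite (closed_potential_complement_walk w).
  case: pot => _ _ _ ->; first by rewrite addbb.
  by rewrite /far; case: dfar => /ltnW ->; rewrite ?orbT.
move: cxy nc Wc; rewrite /around !inE => /or4P[] /eqP -> /=;
  move=> /closed_potential_cell /= [e1 e2 e3] Wc; rewrite ?subrK in e1 e2 e3; congruence.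
Qed.

End ClosedWalk.

Definition on_hchord (a b y : int) (x y' : int) : Prop := y' = y /\ a <= x < b.

Lemma touch_left_end a y : ~~ interior_h S (a - 1) y -> ~~ all (inP S) (around a y).
Proof. by apply: contra; rewrite /interior_h /= /inP /= andbT => /and4P [-> _ -> _]. Qed.

Lemma touch_right_end b y : ~~ interior_h S b y -> ~~ all (inP S) (around b y).
Proof. by apply: contra; rewrite /interior_h /= /inP /= andbT => /and4P [_ -> _ ->]. Qed.

Lemma chord_separation (a b y k : int) c d : no_holes S -> a <= k < b ->
  ~~ interior_h S (a - 1) y -> ~~ interior_h S b y -> interior_h S k y ->
  hcross k y c d -> ~ gwalk (avoiding_step (on_hchord a b y)) c d.
Proof.
(* Closed by the step from [d] back to [c], the walk crosses the chord exactly once: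
   its potential flips once along the chord, yet vanishes at both ends. *)
move=> NH kab na nb ik ck /avoiding_walk_potential [W0 pot0].
have [Sc Sd] := hcross_in ik ck.

have dc : hcross k y d c by rewrite hcross_sym.
have [W pot] : exists W, crossing_potential (on_hchord a b y) (fun x _ => x == k) d d W.
  exists (fun x y' => W0 x y' (+) east_ray_cross x y' d c).
  apply: crossing_potential_cons pot0 => //; first exact: hcross_edge_adj dc.
  by move=> x _ [-> _]; rewrite (hcross_at x y dc) eqxx andbT.
have [Wstep _ _ _] := pot.
have := addb_flip_once (g := W^~ y) kab (fun i iab => Wstep i y (conj erefl iab)).
by rewrite (closed_potential_vanishes pot NH (touch_left_end na))
           (closed_potential_vanishes pot NH (touch_right_end nb)).
Qed.

End Potential.

(** * Separation by chords *)

Lemma join_not_hcross S c d x y : join S c d -> hray S x y -> ~~ hcross x y c d.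
Proof.
case: c d => [c1 c2] [d1 d2] [_ _ J] r; apply/negP; rewrite /hcross !xpair_eqE /= => cr.
case: J => -[/= e1 e2 nr].
- by apply: nr; have [<- <-] : x = c1 /\ y = d2 by lia.
- by apply: nr; have [<- <-] : x = c1 /\ y = c2 by lia.
- lia.
- lia.
Qed.

Lemma join_avoids_hchord S a b y c d :
  hchord S a b y -> join S c d -> avoiding_step S (on_hchord a b y) c d.
Proof.
move=> [rab _ _] J; have [Sc Sd cd] := join_edge_adj J.
by split=> // x _ [-> xab]; apply: join_not_hcross J (rab x xab).
Qed.

Lemma same_pixel_avoids_hchord S a b y c d : hchord S a b y ->
  same_pixel S c d -> gwalk (avoiding_step S (on_hchord a b y)) c d.
Proof. by move=> ch [_ w]; apply: gwalk_sub w => e f; apply: join_avoids_hchord. Qed.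

Lemma hray_separates S N k y c d : bounded_by S N -> no_holes S ->
  hray S k y -> hcross k y c d -> ~ same_pixel S c d.
Proof.
move=> bS NH r ck scd; have [a [b [ch kab]]] := hray_chord bS r.
have [_ na nb] := ch.
apply: (chord_separation bS NH kab na nb (hray_interior r) ck).
exact: same_pixel_avoids_hchord ch scd.
Qed.

Lemma vray_separates S N x j c d : bounded_by S N -> no_holes S ->
  vray S x j -> vcross x j c d -> ~ same_pixel S c d.
Proof.
move=> bS NH r cr /same_pixel_tr.
apply: (hray_separates (bounded_by_tr bS) (no_holes_tr NH) (proj2 (hray_tr S j x) r)).
by rewrite hcross_swap.
Qed.

(* Walks of [R] model dual paths that avoid the edge between the pixels of [u] and
   [v]; without that edge the pixel of [v] cannot reach the pixel of [u]. *)
Definition dual_bridge (S : region) (u v : cell) : Prop :=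
  exists R : cell -> cell -> Prop,
  [/\ forall c d, same_pixel S c d -> gwalk R c d,
      forall c d, inP S c -> inP S d -> edge_adj c d ->
        [\/ R c d, same_pixel S c u /\ same_pixel S d v
                 | same_pixel S c v /\ same_pixel S d u] &
      ~ gwalk R v u].

Section ThinChord.
Variables (S : region) (N : nat) (a b y : int).
Hypotheses (bS : bounded_by S N) (NH : no_holes S) (TH : thin S).
Hypothesis ch : hchord S a b y.

Lemma hchord_interior (k : int) : a <= k < b -> interior_h S k y.
Proof. by case: ch => rab _ _ /rab /hray_interior. Qed.

Lemma hchord_separation (k : int) c d : a <= k < b -> hcross k y c d ->
  ~ gwalk (avoiding_step S (on_hchord a b y)) c d.
Proof.
move=> kab; have [_ na nb] := ch.
exact: (chord_separation bS NH kab na nb (hchord_interior kab)).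
Qed.

Lemma no_vray_across (x : int) : a < x < b -> ~ vray S x y.
Proof.
move=> xab vr.
have /andP [Sl1 Sl] := hchord_interior (k := x - 1) ltac:(lia).
have /andP [Sr1 Sr] := hchord_interior (k := x) ltac:(lia).
(* The ray would make (x, y) a pixel-corner off the boundary. *)

suff corner : pixel_corner S (x, y) x y.
  by move: (@TH (x, y) x y Sr corner); rewrite /on_boundary /= /inP /= Sl1 Sl Sr1 Sr.
exists (x, y); first by rewrite /around !inE eqxx !orbT.
split; first exact: same_pixel_refl.
move=> d; rewrite /around !inE => /or4P[] /eqP -> dxy sp.
- have step : avoiding_step S (on_hchord a b y) (x, y) (x - 1, y).
    by split=> //; [rewrite /edge_adj /=; lia | move=> ? ? _; rewrite hcross_row].
  apply: (@hchord_separation (x - 1) (x - 1, y - 1) (x - 1, y));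
    [lia | by rewrite /hcross !eqxx |].
  apply: gwalk_trans (gwalk1 step).
  exact: same_pixel_avoids_hchord ch (same_pixel_sym sp).
- apply: (@hchord_separation x (x, y) (x, y - 1)); [lia | by rewrite /hcross !eqxx orbT |].
  exact: same_pixel_avoids_hchord ch sp.
- by apply: vray_separates bS NH vr _ sp; rewrite /vcross !eqxx orbT.
- by rewrite eqxx in dxy.
Qed.

Lemma no_vray_across_below (x : int) : a < x < b -> ~ vray S x (y - 1).
Proof.
move=> xab vr; apply: (no_vray_across xab).
have := vray_shift_up vr; rewrite subrK; apply.
have /andP [_ Sl] := hchord_interior (k := x - 1) ltac:(lia).
have /andP [_ Sr] := hchord_interior (k := x) ltac:(lia).
by rewrite /interior_v Sl Sr.
Qed.

Lemma hchord_rows (k : int) : a <= k < b -> forall i, a <= i < b ->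
  same_pixel S (k, y) (i, y) /\ same_pixel S (k, y - 1) (i, y - 1).
Proof.
move=> kab; apply: (int_interval_ind kab).
  by have /andP [? ?] := hchord_interior kab; split; apply: same_pixel_refl.
move=> i ai ib.
have /andP [Si1 Si] := hchord_interior (k := i) ltac:(lia).
have /andP [Sj1 Sj] := hchord_interior (k := i + 1) ltac:(lia).
have up : same_pixel S (i, y) (i + 1, y).
  apply: join_same_pixel; split=> //; constructor 3; split=> //=.
  by apply: no_vray_across; lia.
have down : same_pixel S (i, y - 1) (i + 1, y - 1).
  apply: join_same_pixel; split=> //; constructor 3; split=> //=.
  by apply: no_vray_across_below; lia.
split=> -[u d]; split.
- exact: same_pixel_trans u up.
- exact: same_pixel_trans d down.
- exact: same_pixel_trans u (same_pixel_sym up).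
- exact: same_pixel_trans d (same_pixel_sym down).
Qed.

Lemma hchord_bridge (k : int) c d : a <= k < b -> hcross k y c d -> dual_bridge S c d.
Proof.
move=> kab ck; exists (avoiding_step S (on_hchord a b y)); split.
- by move=> e f; apply: same_pixel_avoids_hchord.
- move=> [i j] f Se Sf ef; case: (boolP ((a <= i < b) && hcross i y (i, j) f)).
    case/andP=> iab /hcross_cases ecr; have [rowU rowD] := hchord_rows kab iab.
    by case: ecr => -[[->] ->]; case/hcross_cases: ck => -[-> ->];
      [constructor 2|constructor 3|constructor 3|constructor 2]; split;
      apply: same_pixel_sym.
  move=> nocross; constructor 1; split=> // x _ [-> xab]; apply: contra nocross => cr.
  by move: (hcross_fst cr) => /= ix; subst x; rewrite xab cr.
- by apply: hchord_separation kab _; rewrite hcross_sym.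
Qed.

End ThinChord.

Lemma dual_bridge_tr S u v : dual_bridge (tr S) (swap u) (swap v) -> dual_bridge S u v.
Proof.
case=> R [spR crossR noR]; exists (fun c d => R (swap c) (swap d)); split.
- move=> c d /same_pixel_tr /spR w; rewrite -[c]swapK -[d]swapK.
  by apply: gwalk_map w => e f; rewrite !swapK.
- move=> c d Sc Sd cd; have := crossR (swap c) (swap d) Sc Sd.
  rewrite edge_adj_swap => /(_ cd) [?|[]|[]]; first by constructor 1.
    by move=> /same_pixel_tr_swap ? /same_pixel_tr_swap ?; constructor 2.
  by move=> /same_pixel_tr_swap ? /same_pixel_tr_swap ?; constructor 3.
- by move=> w; apply: noR; apply: (gwalk_map (f := swap)) w.
Qed.

Lemma hray_bridge S N k y c d : bounded_by S N -> no_holes S -> thin S ->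
  hray S k y -> hcross k y c d -> dual_bridge S c d.
Proof.
move=> bS NH TH r ck; have [a [b [ch kab]]] := hray_chord bS r.
exact: (hchord_bridge bS NH TH ch kab ck).
Qed.

Lemma vray_bridge S N x j c d : bounded_by S N -> no_holes S -> thin S ->
  vray S x j -> vcross x j c d -> dual_bridge S c d.
Proof.
move=> bS NH TH r cr; apply: dual_bridge_tr.
apply: (hray_bridge (bounded_by_tr bS) (no_holes_tr NH) (thin_tr TH) (proj2 (hray_tr S j x) r)).
by rewrite hcross_swap.
Qed.

Lemma cut_edge_bridge S N c d : bounded_by S N -> no_holes S -> thin S ->
  inP S c -> inP S d -> edge_adj c d -> ~ join S c d -> dual_bridge S c d.
Proof.
move=> bS NH TH Sc Sd /edge_adj_cases [i [j []]] [ec ed]; subst c d => nj.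
- apply: (hray_bridge bS NH TH (k := i) (y := j + 1)); last by rewrite cross_vstep !eqxx.
  by apply: NNPP => nr; apply: nj; split=> //; constructor 1.
- apply: (hray_bridge bS NH TH (k := i) (y := j + 1)); last by rewrite cross_vstep !eqxx.
  by apply: NNPP => nr; apply: nj; split=> //; constructor 2.
- apply: (vray_bridge bS NH TH (x := i + 1) (j := j)); last by rewrite cross_hstep !eqxx.
  by apply: NNPP => nr; apply: nj; split=> //; constructor 3.
- apply: (vray_bridge bS NH TH (x := i + 1) (j := j)); last by rewrite cross_hstep !eqxx.
  by apply: NNPP => nr; apply: nj; split=> //; constructor 4.
Qed.

Definition pixel_cycle (S : region) (s : seq cell) : Prop :=
  [/\ (3 <= size s)%N,
      forall i j, (i < size s)%N -> (j < size s)%N -> i <> j ->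
        ~ same_pixel S (nth (0, 0) s i) (nth (0, 0) s j) &
      forall i, (i < size s)%N ->
        pixel_adj S (nth (0, 0) s i) (nth (0, 0) s (i.+1 %% size s))].

Lemma pixel_cycle_index S s i j : pixel_cycle S s ->
  (i < size s)%N -> (j < size s)%N ->
  same_pixel S (nth (0, 0) s i) (nth (0, 0) s j) -> i = j.
Proof.
case=> _ D _ ilt jlt sp; have [//|/eqP nij] := eqVneq i j.
by case: (D i j ilt jlt nij sp).
Qed.

Lemma gwalk_cycle_arc (R : cell -> cell -> Prop) (p : nat -> cell) n : (1 < n)%N ->
  (forall k, (0 < k < n)%N -> gwalk R (p k) (p (k.+1 %% n)%N)) -> gwalk R (p 1%N) (p 0%N).
Proof.
move=> n_gt1 step.
have arc m : (0 < m < n)%N -> gwalk R (p 1%N) (p m).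
  elim: m => [|m IH] mn; first by lia.
  have [->|m_gt0] := posnP m; first exact: gw_refl.
  apply: gwalk_trans (IH _) _; first lia.
  by have := step m ltac:(lia); rewrite modn_small.
apply: gwalk_trans (arc n.-1 _) _; first lia.
by have := step n.-1 ltac:(lia); rewrite prednK ?modnn //; lia.
Qed.

Lemma pixel_cycle_no_bridge S s u v : pixel_cycle S s -> dual_bridge S u v ->
  same_pixel S (nth (0, 0) s 0) u -> same_pixel S (nth (0, 0) s 1) v -> False.
Proof.
move=> cyc [R [spR crossR noR]] s0u s1v; have [n3 _ adj] := cyc.
apply: noR; apply: gwalk_trans (spR _ _ (same_pixel_sym s1v)) _.
apply: gwalk_trans (spR _ _ s0u).
apply: (@gwalk_cycle_arc R (nth (0, 0) s) (size s)); first lia.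
move=> k kn; have [_ [e [f [pe pf ef]]]] := adj k ltac:(lia).
have k1n : (k.+1 %% size s < size s)%N by rewrite ltn_mod; lia.
case: (crossR e f (same_pixel_in pe) (same_pixel_in pf) ef) => [Ref|[eu fv]|[ev fu]].
- exact: gwalk_trans (spR _ _ pe) (gw_step Ref (spR _ _ (same_pixel_sym pf))).
- have := pixel_cycle_index cyc (i := k) (j := 0) ltac:(lia) ltac:(lia).
  by move/(_ (same_pixel_trans pe (same_pixel_trans eu (same_pixel_sym s0u)))); lia.
- have := pixel_cycle_index cyc (i := k) (j := 1) ltac:(lia) ltac:(lia).
  move/(_ (same_pixel_trans pe (same_pixel_trans ev (same_pixel_sym s1v)))) => k1.
  have := pixel_cycle_index cyc (i := k.+1 %% size s) (j := 0) k1n ltac:(lia).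
  move/(_ (same_pixel_trans pf (same_pixel_trans fu (same_pixel_sym s0u)))).
  by rewrite k1 modn_small //; lia.
Qed.

Lemma dual_connected_of_cells S : cells_connected S -> dual_connected S.
Proof.
move=> conn c d Sc Sd; apply: gwalk_sub (conn c d Sc Sd) => e f /and3P [Se Sf ef].
have [sp|nsp] := classic (same_pixel S e f); [by left | right].
by split=> //; exists e, f; split=> //; apply: same_pixel_refl.
Qed.

Theorem lemma5 (S : region) :
  orthogonal_polygon S -> thin S -> no_holes S -> dual_is_tree S.
Proof.
move=> [[N bS] _ conn _] TH NH; split; first exact: dual_connected_of_cells.
move=> [s cyc]; have [n3 _ adj] := cyc.
have [nsp [c [d [s0c s1d cd]]]] := adj 0%N ltac:(lia).
have one_mod : (0.+1 %% size s)%N = 1%N by apply: modn_small; lia.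
rewrite one_mod in nsp s1d.
have Sc := same_pixel_in s0c; have Sd := same_pixel_in s1d.
apply: (pixel_cycle_no_bridge cyc (cut_edge_bridge bS NH TH Sc Sd cd _) s0c s1d).
move=> /join_same_pixel J; apply: nsp.
exact: same_pixel_trans s0c (same_pixel_trans J (same_pixel_sym s1d)).
Qed.
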